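(* Let $D_x$ be a distribution over features $\mathcal{X}$, let $\alpha>0$, and let $k\ge1$ be odd. Let the label distribution be $D^\alpha_y=1-2\,\mathrm{Bernoulli}(\alpha)$ (so $y=-1$ with probability $\alpha$ and $y=1$ otherwise), and let $D=D_x\otimes D^\alpha_y$ be the joint distribution with independent features and labels. Let $h:\mathcal{X}\to\{-1,1\}$ be the $k$-nearest-neighbors classifier trained on $S\sim D^n$ with $n\ge k$, and let $x\in\mathcal{X}$. Then $$\mathbb{E}_{S\sim D^n}[h(x)]=-1+2\phi_k(\alpha),\qquad \phi_k(\alpha)=\Pr\left(\mathrm{Binomial}(k,\alpha)\le\lfloor k/2\rfloor\right).$$
   Context: The $k$-nearest-neighbors classifier (with $k$ odd) trained on $S=\{(x_i,y_i)\}_{i=1}^n$ returns, for a query $x$, the majority label among the $k$ training points whose features are nearest to $x$ (with respect to a metric on $\mathcal{X}$; the set of neighbors depends on the training features only). *)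

From HB Require Import structures.
From mathcomp Require Import all_boot all_order all_algebra.
From mathcomp Require Import all_classical all_reals all_analysis.
Set Implicit Arguments. Unset Strict Implicit. Unset Printing Implicit Defensive.
Import Order.TTheory GRing.Theory Num.Theory.
Local Open Scope classical_set_scope.
Local Open Scope ring_scope.

Definition is_metric (R : realType) (X : Type) (dist : X -> X -> R) : Prop :=
  [/\ forall x y, 0 <= dist x y,
      forall x y, dist x y = 0 <-> x = y,
      forall x y, dist x y = dist y x
    & forall x y z, dist x z <= dist x y + dist y z].

(* The k nearest neighbours of the query x among training features xs
   (ties in distance broken by the smaller index): index i is a neighbour iff
   fewer than k indices j precede it in the order (dist x (xs j), j). *)
Definition knn_neighbors (R : realType) (X : Type) (n k : nat)
    (dist : X -> X -> R) (x : X) (xs : 'I_n -> X) : {set 'I_n} :=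
  [set i | (#|[set j | ((dist x (xs j) < dist x (xs i))%R
                      || ((dist x (xs j) == dist x (xs i)) && (j < i)%N))]| < k)%N].

Definition knn (R : realType) (X : Type) (n k : nat)
    (dist : X -> X -> R) (S : 'I_n -> X * R) (x : X) : R :=
  if 0 < \sum_(i in knn_neighbors k dist x (fun j => (S j).1)) (S i).2
  then 1 else -1.

Definition label_dist (R : realType) (alpha : R) : set R -> \bar R :=
  pushforward (bernoulli_prob alpha) (fun b : bool => 1 - 2 * (b%:R : R)).

Definition phi (R : realType) (k : nat) (alpha : R) : R :=
  \sum_(j < (k./2).+1) ('C(k, j))%:R * alpha ^+ j * (1 - alpha) ^+ (k - j).

Definition mutually_independent d d' (Omega : measurableType d)
    (T : measurableType d') (R : realType) (P : probability Omega R) (n : nat)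
    (Z : 'I_n -> Omega -> T) : Prop :=
  forall (A : 'I_n -> set T), (forall i, measurable (A i)) ->
  forall J : {set 'I_n},
    P (\bigcap_(i in [set` J]) (Z i @^-1` A i)) =
    (\prod_(i in J) P (Z i @^-1` A i))%E.

(* The neighbour set N of the query depends only on the features and always
   has k elements. The labels are i.i.d., equal to -1 with probability alpha and
   to 1 otherwise, and independent of the features; a pi-lambda argument upgrades
   the independence of the samples to independence of the labels from the
   sigma-algebra generated by all the features. Hence the event "the neighbours
   are N, and exactly those in T are labelled -1" has probability
   P(neighbours = N) alpha^|T| (1 - alpha)^(k - |T|). As k is odd, the vote is
   positive exactly when |T| <= k/2, and summing over N and T gives
   P(h(x) = 1) = phi_k(alpha), whence E[h(x)] = 2 phi_k(alpha) - 1. *)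

From HB Require Import structures.
From mathcomp Require Import all_boot all_order all_algebra.
From mathcomp Require Import all_classical all_reals all_analysis.
From mathcomp Require Import measurable_realfun lra zify.
Set Implicit Arguments. Unset Strict Implicit. Unset Printing Implicit Defensive.
Import Order.TTheory GRing.Theory Num.Theory.
Local Open Scope ring_scope.

Section LexRank.
Variables (R : realDomainType) (n : nat) (v : 'I_n -> R).

Definition lex_lt (a b : 'I_n) : bool :=
  (v a < v b) || ((v a == v b) && (a < b)%N).

Definition lex_rank (i : 'I_n) : nat := #|[set j | lex_lt j i]|.

Definition lowest (k : nat) : {set 'I_n} := [set i | (lex_rank i < k)%N].

Lemma lex_ltxx a : ~~ lex_lt a a.
Proof. by rewrite /lex_lt ltxx eqxx ltnn. Qed.

Lemma lex_lt_trans a b c : lex_lt a b -> lex_lt b c -> lex_lt a c.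
Proof.
rewrite /lex_lt => /orP[ab|/andP[/eqP ab lab]] /orP[bc|/andP[/eqP bc lbc]].
- by rewrite (lt_trans ab bc).
- by rewrite -bc ab.
- by rewrite ab bc.
- by rewrite ab bc eqxx (ltn_trans lab lbc) orbT.
Qed.

Lemma lex_lt_total a b : a != b -> lex_lt a b || lex_lt b a.
Proof.
move=> ab; rewrite /lex_lt; case: (ltgtP (v a) (v b)) => //= _.
by rewrite -neq_ltn.
Qed.

Lemma lex_rank_lt i : (lex_rank i < n)%N.
Proof.
rewrite -[n]card_ord -cardsT; apply: proper_card; rewrite properT.
by apply/eqP => /setP/(_ i); rewrite !inE (negbTE (lex_ltxx i)).
Qed.

Lemma lex_rank_mono a b : lex_lt a b -> (lex_rank a < lex_rank b)%N.
Proof.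
move=> ab; apply: proper_card; rewrite properE; apply/andP; split.
  by apply/fintype.subsetP => j; rewrite !inE => ja; apply: lex_lt_trans ja ab.
by apply/fintype.subsetPn; exists a; rewrite !inE ?lex_ltxx.
Qed.

Lemma lex_rank_inj : injective lex_rank.
Proof.
move=> a b eab; apply/eqP/negPn/negP => /lex_lt_total /orP[] /lex_rank_mono;
  by rewrite eab ltnn.
Qed.

Lemma card_lowest k : (k <= n)%N -> #|lowest k| = k.
Proof.
move=> kn; pose r i : 'I_n := Ordinal (lex_rank_lt i).
have r_inj : injective r by move=> a b /(congr1 val) /lex_rank_inj.
have -> : lowest k = r @^-1: (widen_ord kn @: [set: 'I_k]).
  apply/setP => i; rewrite !inE.
  apply/idP/imsetP => [ik|[j _ /(congr1 val) /= ->]] //.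
  by exists (Ordinal ik); rewrite ?inE //; apply: val_inj.
rewrite card_preimset // card_imset ?cardsT ?card_ord //.
by move=> a b /(congr1 val) /= /val_inj.
Qed.

End LexRank.

Lemma knn_neighborsE (R : realType) (X : Type) (n k : nat)
    (dist : X -> X -> R) (x : X) (xs : 'I_n -> X) :
  knn_neighbors k dist x xs = lowest (fun j => dist x (xs j)) k.
Proof.
apply/setP => i; rewrite !inE; congr (_ < _)%N.
by apply: eq_card => j; rewrite inE; apply/idP/idP => [/set_mem | /mem_set].
Qed.

Section SubsetSums.
Variables (R : comPzRingType) (n : nat).
Implicit Types (N T : {set 'I_n}) (a b : R).

Lemma card_subset_compl N T : T \subset N ->
  #|[pred i in N | i \notin T]| = (#|N| - #|T|)%N.
Proof.
move=> TN; rewrite -{2}(finset.setIidPr TN) -cardsD.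
by apply: eq_card => i; rewrite !inE andbC.
Qed.

Lemma card_subset_in N T : T \subset N -> #|[pred i in N | i \in T]| = #|T|.
Proof.
move=> TN; apply: eq_card => i; rewrite !inE andbC.
by case: (boolP (i \in T)) => // /(fintype.subsetP TN).
Qed.

Lemma sum_subset_if N T a b : T \subset N ->
  \sum_(i in N) (if i \in T then a else b) = a *+ #|T| + b *+ (#|N| - #|T|).
Proof.
move=> TN; rewrite (bigID (mem T)) /=.
rewrite (eq_bigr (fun=> a)) => [|i /andP[_ ->] //].
rewrite [X in _ + X](eq_bigr (fun=> b)) => [|i /andP[_ /negbTE ->] //].
by rewrite !sumr_const card_subset_in // card_subset_compl.
Qed.

Lemma prod_subset_if N T a b : T \subset N ->
  \prod_(i in N) (if i \in T then a else b) = a ^+ #|T| * b ^+ (#|N| - #|T|).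
Proof.
move=> TN; rewrite (bigID (mem T)) /=.
rewrite (eq_bigr (fun=> a)) => [|i /andP[_ ->] //].
rewrite [X in _ * X](eq_bigr (fun=> b)) => [|i /andP[_ /negbTE ->] //].
by rewrite !prodr_const card_subset_in // card_subset_compl.
Qed.

Lemma sum_subsets_by_card k N (Q : pred nat) (F : nat -> R) : #|N| = k ->
  \sum_(T : {set 'I_n} | (T \subset N) && Q #|T|) F #|T| =
  \sum_(j < k.+1 | Q j) 'C(k, j)%:R * F j.
Proof.
move=> cardN.
have cardT T : T \subset N -> (#|T| < k.+1)%N by move/subset_leq_card; rewrite cardN.
rewrite (partition_big (fun T => inord #|T| : 'I_k.+1) (fun j : 'I_k.+1 => Q j))
  => [|T /andP[TN QT]].
  apply: eq_bigr => j Qj.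
  pose draws := [set T : {set 'I_n} | T \subset N & #|T| == j].
  rewrite (eq_bigl (fun T => T \in draws)) => [|T].
    rewrite (eq_bigr (fun=> F j)) => [|T]; last by rewrite inE => /andP[_ /eqP ->].
    by rewrite sumr_const cards_draws cardN mulr_natl.
  rewrite !inE -andbA; apply/and3P/andP => [[TN _ /eqP <-]|[TN /eqP Tj]].
    by rewrite inordK ?cardT.
  by split; rewrite // ?Tj //; apply/eqP/val_inj; rewrite /= inordK ?Tj.
by rewrite inordK ?cardT.
Qed.

End SubsetSums.

Lemma binomial_sum1 (R : comPzRingType) (k : nat) (a : R) :
  \sum_(j < k.+1) 'C(k, j)%:R * a ^+ j * (1 - a) ^+ (k - j) = 1.
Proof.
rewrite -[RHS](expr1n _ k) -[1 in RHS](subrK a) exprDn.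
by apply: eq_bigr => j _; rewrite -mulrA mulr_natl mulrC.
Qed.

Lemma phiE (R : realType) (k : nat) (a : R) :
  phi k a =
  \sum_(j < k.+1 | (j <= k./2)%N) 'C(k, j)%:R * a ^+ j * (1 - a) ^+ (k - j).
Proof.
pose F j := 'C(k, j)%:R * a ^+ j * (1 - a) ^+ (k - j).
rewrite /phi (big_ord_widen k.+1 F) //.
by rewrite ltnS leq_half_double; lia.
Qed.

Lemma leq_half_odd (k t : nat) : odd k -> (t <= k./2)%N = (t < k - t)%N.
Proof.
move=> odd_k; have := odd_double_half k; rewrite odd_k add1n -muln2.
by move: k./2 => h kE; apply/idP/idP; lia.
Qed.

Local Open Scope classical_set_scope.

Section FiniteBooleanEvents.
Variables (d : measure_display) (T : measurableType d).

Lemma measurable_ffun_pred (I : finType) (b : I -> T -> bool)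
    (Phi : pred {ffun I -> bool}) :
  (forall i, measurable_fun setT (b i)) ->
  measurable [set w | Phi [ffun i => b i w]].
Proof.
move=> mb.
have -> : [set w | Phi [ffun i => b i w]] =
    \bigcup_(v in [set v | Phi v]) \bigcap_(i in [set: I]) (b i @^-1` [set v i]).
  apply/seteqP; split => w /=.
    by move=> Pw; exists [ffun i => b i w] => // i _ /=; rewrite ffunE.
  move=> [v Pv /= bv]; suff -> : [ffun i => b i w] = v by [].
  by apply/ffunP => i; rewrite ffunE; apply: bv.
apply: fin_bigcup_measurable; first exact: finite_finset.
move=> v _; apply: fin_bigcap_measurable; first exact: finite_finset.
by move=> i _; rewrite -(setTI (b i @^-1` _)); exact: mb.
Qed.

Lemma measurable_lowest (R : realType) (n k : nat) (D : 'I_n -> T -> R)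
    (N : {set 'I_n}) :
  (forall i, measurable_fun setT (D i)) ->
  measurable [set w | lowest (fun j => D j w) k = N].
Proof.
move=> mD.
pose Phi (v : {ffun 'I_n * 'I_n -> bool}) :=
  ([set i | (#|[set j | v (j, i)]| < k)%N] == N)%SET.
have -> : [set w | lowest (fun j => D j w) k = N] =
    [set w | Phi [ffun p => lex_lt (fun j => D j w) p.1 p.2]].
  apply/seteqP; split => w; rewrite /= /Phi; [move=> <-; apply/eqP | move/eqP <-];
    apply/setP => i; rewrite !inE; congr (_ < _)%N;
    by apply: eq_card => j; rewrite !inE ffunE.
apply: measurable_ffun_pred => -[a b] /=.
apply: measurable_or; first exact: measurable_fun_ltr.
by apply: measurable_and; [exact: measurable_fun_eqr | exact: measurable_cst].
Qed.

End FiniteBooleanEvents.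

Lemma measure_disjoint_sum d (T : measurableType d) (R : realType)
    (mu : {measure set T -> \bar R}) (I : finType) (Q : pred I) (A : I -> set T) :
  (forall i, measurable (A i)) ->
  (forall i j, Q i -> Q j -> i != j -> A i `&` A j = set0) ->
  (\sum_(i | Q i) mu (A i))%E = mu (\bigcup_(i in [set i | Q i]) A i).
Proof.
move=> mA dA; rewrite measure_fin_bigcup //; last 2 first.
- exact: finite_finset.
- by apply/trivIsetP => i j Qi Qj; apply: dA.
rewrite -(@bigfs _ _ _ _ (enum I)) ?enum_uniq ?big_enum_cond //.
by move=> i _; rewrite mem_enum.
Qed.

Lemma probability_sandwich d (T : measurableType d) (R : realType)
    (P : probability T R) (A B G : set T) (p : R) :
  measurable A -> measurable B -> measurable G -> A `<=` G -> B `<=` ~` G ->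
  P A = p%:E -> P B = (1 - p)%:E -> P G = p%:E.
Proof.
move=> mA mB mG AG BG PA PB.
have PAG : (P A <= P G)%E by apply: le_measure; rewrite ?inE.
have PBG : (P B <= P (~` G))%E.
  by apply: le_measure; rewrite ?inE //; exact: measurableC.
rewrite probability_setC // -(fineK (fin_num_measure P _ mG)) in PAG PBG *.
rewrite PA lee_fin in PAG; rewrite PB -EFinB lee_fin in PBG.
by congr (_%:E); lra.
Qed.

Lemma integral_indicator_sign d (T : measurableType d) (R : realType)
    (P : probability T R) (G : set T) (p : R) :
  measurable G -> P G = p%:E ->
  (\int[P]_w (\1_G w - \1_(~` G) w)%:E)%E = (2 * p - 1)%:E.
Proof.
move=> mG PG; have mGC := measurableC mG.
rewrite (eq_integral (fun w => (\1_G w)%:E - (\1_(~` G) w)%:E)%E); last first.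
  by move=> w _; rewrite EFinB.
rewrite integralB_EFin //; last 2 first.
- exact: (integrable_indic P mG).
- exact: (integrable_indic P mGC).
have PGC : P (~` G) = (1 - p)%:E by rewrite probability_setC // PG.
have intG : (\int[P]_w (\1_G w)%:E = p%:E)%E.
  by rewrite integral_indic // setIT; exact: PG.
have intGC : (\int[P]_w (\1_(~` G) w)%:E = (1 - p)%:E)%E.
  by rewrite integral_indic // setIT; exact: PGC.
rewrite intG intGC -EFinB.
by congr (_%:E); lra.
Qed.

Section LabelDistribution.
Variables (R : realType) (alpha : R).
Hypotheses (alpha_ge0 : 0 <= alpha) (alpha_le1 : alpha <= 1).

Definition label_prob (B : set R) : R :=
  alpha * ((-1) \in B)%:R + (1 - alpha) * (1 \in B)%:R.

Lemma label_distE B : label_dist alpha B = (label_prob B)%:E.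
Proof.
rewrite /label_dist /pushforward bernoulli_probE ?alpha_ge0 ?alpha_le1 //.
rewrite !diracE /label_prob -!EFinM -EFinD.
have inE b : (b \in (fun b : bool => 1 - 2 * b%:R) @^-1` B) =
  ((1 - 2 * b%:R : R) \in B) by [].
by rewrite !inE /= mulr1 mulr0 subr0 (_ : 1 - 2 = -1 :> R) //; lra.
Qed.

Lemma label_prob_ge0 B : 0 <= label_prob B.
Proof. by rewrite addr_ge0 // mulr_ge0 // ?subr_ge0 // ler0n. Qed.

Lemma label_prob0 : label_prob set0 = 0.
Proof. by rewrite /label_prob !in_set0 !mulr0 addr0. Qed.

Lemma label_probT : label_prob setT = 1.
Proof. by rewrite /label_prob !in_setT !mulr1 addrC subrK. Qed.

Lemma label_probN1 : label_prob [set -1] = alpha.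
Proof.
have one_neq : (1 == -1 :> R) = false by apply/eqP; lra.
by rewrite /label_prob !in_set1 eqxx one_neq mulr1 mulr0 addr0.
Qed.

Lemma label_prob1 : label_prob [set 1] = 1 - alpha.
Proof.
have one_neq : (-1 == 1 :> R) = false by apply/eqP; lra.
by rewrite /label_prob !in_set1 eqxx one_neq mulr1 mulr0 add0r.
Qed.

Lemma product_label_distX d (X : measurableType d) (Dx : probability X R) A B :
  measurable A ->
  (Dx \x label_dist alpha)%E (A `*` B) = (Dx A * (label_prob B)%:E)%E.
Proof.
move=> mA; rewrite /product_measure1 /=.
transitivity (\int[Dx]_x (label_prob B * \1_A x)%:E)%E.
  apply: eq_integral => y _ /=; rewrite label_distE indicE.
  have [yA|yA] := boolP (y \in A).
    by rewrite in_xsectionX // mulr1.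
  by rewrite notin_xsectionX // mulr0 label_prob0.
rewrite integralZl_indic //; last by rewrite ltNge label_prob_ge0.
by rewrite integral_indic // setIT muleC.
Qed.

End LabelDistribution.

Section FeatureLabelIndependence.
Variables (R : realType) (dX : measure_display) (X : measurableType dX)
  (Dx : probability X R) (alpha : R) (n : nat)
  (dO : measure_display) (Omega : measurableType dO) (P : probability Omega R)
  (S : 'I_n -> Omega -> X * R).
Hypotheses (alpha_ge0 : 0 <= alpha) (alpha_le1 : alpha <= 1)
  (mS : forall i, measurable_fun setT (S i))
  (lawS : forall i A, measurable A ->
     P (S i @^-1` A) = (Dx \x label_dist alpha)%E A)
  (indS : mutually_independent P S).

Definition feature_rectangles : set (set Omega) :=
  [set F | exists2 B : 'I_n -> set X, (forall i, measurable (B i)) &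
     F = \bigcap_(i in [set: 'I_n]) S i @^-1` (B i `*` setT)].

Definition label_event (E : 'I_n -> set R) : set Omega :=
  \bigcap_(i in [set: 'I_n]) S i @^-1` (setT `*` E i).

Lemma measurable_sample_preimage i (A : set (X * R)) :
  measurable A -> measurable (S i @^-1` A).
Proof. by move=> mA; rewrite -(setTI (S i @^-1` _)); exact: mS. Qed.

Lemma measurable_label_event E :
  (forall i, measurable (E i)) -> measurable (label_event E).
Proof.
move=> mE; apply: fin_bigcap_measurable; first exact: finite_finset.
by move=> i _; exact: measurable_sample_preimage (measurableX measurableT (mE i)).
Qed.

Lemma measurable_feature_rectangle F : feature_rectangles F -> measurable F.
Proof.
move=> [B mB ->]; apply: fin_bigcap_measurable; first exact: finite_finset.
by move=> i _; exact: measurable_sample_preimage (measurableX (mB i) measurableT).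
Qed.

Lemma prob_sample_rectangles (B : 'I_n -> set X) (E : 'I_n -> set R) :
  (forall i, measurable (B i)) -> (forall i, measurable (E i)) ->
  P (\bigcap_(i in [set: 'I_n]) S i @^-1` (B i `*` E i)) =
  (\prod_(i < n) (fine (Dx (B i)) * label_prob alpha (E i)))%:E.
Proof.
move=> mB mE; have mBE i := measurableX (mB i) (mE i).
have := indS mBE [set: 'I_n]%SET.
have -> : [set` [set: 'I_n]%SET] = [set: 'I_n].
  by apply/seteqP; split => // i _; rewrite /= finset.in_setT.
move=> ->; rewrite -prodEFin.
apply: eq_big => [i|i _]; first by rewrite finset.in_setT.
rewrite lawS // product_label_distX // EFinM fineK //.
exact: fin_num_measure.
Qed.

Let indep_labels E (F : set Omega) : Prop := measurable F /\
  P (F `&` label_event E) = (P F * (\prod_(i < n) label_prob alpha (E i))%:E)%E.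

Lemma indep_labels_rectangle E : (forall i, measurable (E i)) ->
  feature_rectangles `<=` indep_labels E.
Proof.
move=> mE F rectF; split; first exact: measurable_feature_rectangle.
case: rectF => B mB ->.
have -> : (\bigcap_(i in [set: 'I_n]) S i @^-1` (B i `*` setT)) `&` label_event E =
    \bigcap_(i in [set: 'I_n]) S i @^-1` (B i `*` E i).
  apply/seteqP; split => w /=.
    by move=> [BS ES] i _; split; [exact: (BS i I).1 | exact: (ES i I).2].
  by move=> BES; split => i _; have [] := BES i I.
rewrite !prob_sample_rectangles // -EFinM -big_split /=.
by congr (_%:E); apply: eq_bigr => i _; rewrite label_probT mulr1.
Qed.

Lemma prob_label_event E : (forall i, measurable (E i)) ->
  P (label_event E) = (\prod_(i < n) label_prob alpha (E i))%:E.
Proof.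
move=> mE; have rectT : feature_rectangles setT.
  by exists (fun=> setT) => //; apply/seteqP; split => w // _ i _.
have [_] := indep_labels_rectangle mE rectT.
by rewrite setTI probability_setT mul1e.
Qed.

Lemma indep_labelsC E A : (forall i, measurable (E i)) ->
  indep_labels E A -> indep_labels E (~` A).
Proof.
move=> mE [mA PA]; split; first exact: measurableC.
have mL := measurable_label_event mE.
have -> : P (~` A `&` label_event E) =
    (P (label_event E) - P (A `&` label_event E))%E.
  rewrite setIC -setDE measureD // ?(setIC _ A) //.
  by rewrite (le_lt_trans (probability_le1 _ mL)) ?ltry.
rewrite PA prob_label_event // probability_setC // -(fineK (fin_num_measure P _ mA)).
by rewrite -EFinM -EFinB -EFinM mulrBl mul1r.
Qed.

Lemma indep_labels_bigcup E (F : (set Omega)^nat) :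
  (forall i, measurable (E i)) -> trivIset setT F ->
  (forall m, indep_labels E (F m)) -> indep_labels E (\bigcup_m F m).
Proof.
move=> mE tF indF; have mF m := (indF m).1.
have mFL m : measurable (F m `&` label_event E).
  by apply: measurableI => //; exact: measurable_label_event.
split; first by apply: bigcup_measurable => m _.
have -> : P ((\bigcup_m F m) `&` label_event E) =
    (\sum_(0 <= m <oo | m \in setT) P (F m `&` label_event E))%E.
  rewrite setI_bigcupl measure_bigcup //; apply/trivIsetP => i j _ _ ij.
  move/trivIsetP : tF => /(_ i j I I ij).
  by rewrite setIACA setIid => ->; rewrite set0I.
have -> : P (\bigcup_m F m) = (\sum_(0 <= m <oo | m \in setT) P (F m))%E.
  exact: measure_bigcup.
rewrite muleC -nneseriesZl; last by move=> m _; exact: measure_ge0.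
by apply: eq_eseriesr => m _; rewrite (indF m).2 muleC.
Qed.

Lemma indep_labels_features E (F : set Omega) : (forall i, measurable (E i)) ->
  <<s feature_rectangles >> F ->
  P (F `&` label_event E) = (P F * (\prod_(i < n) label_prob alpha (E i))%:E)%E.
Proof.
move=> mE genF; suff [] : indep_labels E F by [].
apply: (@dynkin_induction _ (g_sigma_algebraType feature_rectangles)
  feature_rectangles (indep_labels E)) => //.
- move=> _ _ [BA mBA ->] [BB mBB ->]; exists (fun i => BA i `&` BB i).
    by move=> i; exact: measurableI.
  apply/seteqP; split => w /=.
    move=> [BAw BBw] i _; split => //.
    by split; [exact: (BAw i I).1 | exact: (BBw i I).1].
  by move=> Bw; split => i _; split => //; have [[]] := Bw i I.
- split; first exact: measurableT.
  by rewrite setTI probability_setT mul1e prob_label_event.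
- exact: indep_labels_rectangle.
- by move=> A _; apply: indep_labelsC.
- by move=> G _ tG; apply: indep_labels_bigcup.
Qed.

End FeatureLabelIndependence.

Section NearestNeighbours.
Variables (R : realType) (dX : measure_display) (X : measurableType dX)
  (Dx : probability X R) (alpha : R) (k n : nat) (dist : X -> X -> R)
  (dO : measure_display) (Omega : measurableType dO) (P : probability Omega R)
  (S : 'I_n -> Omega -> X * R) (x : X).
Hypotheses (alpha_ge0 : 0 <= alpha) (alpha_le1 : alpha <= 1)
  (odd_k : odd k) (k_le_n : (k <= n)%N)
  (mdist : forall y, measurable_fun setT (dist y))
  (mS : forall i, measurable_fun setT (S i))
  (lawS : forall i A, measurable A ->
     P (S i @^-1` A) = (Dx \x label_dist alpha)%E A)
  (indS : mutually_independent P S).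
Implicit Types (N T : {set 'I_n}) (p q : {set 'I_n} * {set 'I_n}) (w : Omega).

Definition neighbours (w : Omega) : {set 'I_n} :=
  lowest (fun j => dist x (S j w).1) k.

Definition neighbour_event (N : {set 'I_n}) : set Omega :=
  [set w | neighbours w = N].

Definition labels_on (N T : {set 'I_n}) (i : 'I_n) : set R :=
  if i \in N then (if i \in T then [set -1] else [set 1]) else setT.

Definition configuration (p : {set 'I_n} * {set 'I_n}) : set Omega :=
  neighbour_event p.1 `&` label_event S (labels_on p.1 p.2).

Definition majority_positive : set Omega :=
  [set w | 0 < \sum_(i in neighbours w) (S i w).2].

Lemma card_neighbours w : #|neighbours w| = k.
Proof. exact: card_lowest. Qed.

Lemma measurable_neighbour_event N : measurable (neighbour_event N).
Proof.
apply: measurable_lowest => j; apply: (measurableT_comp (mdist x)).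
exact: measurableT_comp measurable_fst (mS j).
Qed.

Lemma neighbour_event_features N :
  <<s feature_rectangles S >> (neighbour_event N).
Proof.
apply: (@measurable_lowest _ (g_sigma_algebraType (feature_rectangles S))).
move=> j _ Y mY; rewrite setTI; apply: sub_gen_smallest.
exists (fun i => if i == j then dist x @^-1` Y else setT).
  by move=> i; case: eqP => _ //; rewrite -(setTI (dist x @^-1` Y)); exact: mdist.
apply/seteqP; split => w /=; first by move=> Yw i _; case: eqP => [->|].
by move=> /(_ j I); rewrite eqxx => -[].
Qed.

Lemma measurable_labels_on N T i : measurable (labels_on N T i).
Proof. by rewrite /labels_on; case: ifP => _ //; case: ifP. Qed.

Lemma measurable_configuration p : measurable (configuration p).
Proof.
apply: measurableI; first exact: measurable_neighbour_event.
by apply: (measurable_label_event mS) => i; exact: measurable_labels_on.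
Qed.

Lemma prob_configuration N T : T \subset N ->
  P (configuration (N, T)) =
  (fine (P (neighbour_event N)) *
   (alpha ^+ #|T| * (1 - alpha) ^+ (#|N| - #|T|)))%:E.
Proof.
move=> TN; rewrite /configuration /=.
rewrite (indep_labels_features alpha_ge0 alpha_le1 mS lawS indS _
  (neighbour_event_features N)); last exact: measurable_labels_on.
rewrite -(fineK (fin_num_measure P _ (measurable_neighbour_event N))) -EFinM.
congr ((_ * _)%:E); rewrite -prod_subset_if // [RHS]big_mkcond /=.
apply: eq_bigr => i _; rewrite /labels_on; case: ifP => _; last exact: label_probT.
by case: ifP => _; [exact: label_probN1 | exact: label_prob1].
Qed.

Lemma neighbour_event0 N : #|N| != k -> neighbour_event N = set0.
Proof.
move=> cardN; apply/seteqP; split => w //= wN.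
by move: cardN; rewrite -wN card_neighbours eqxx.
Qed.

Lemma sum_prob_neighbour_event :
  \sum_(N : {set 'I_n}) fine (P (neighbour_event N)) = 1.
Proof.
apply: EFin_inj; rewrite -sumEFin.
rewrite (eq_bigr (fun N => P (neighbour_event N))) => [|N _]; last first.
  by rewrite fineK // fin_num_measure //; exact: measurable_neighbour_event.
rewrite (measure_disjoint_sum P (Q := xpredT)) => [|N|N N' _ _ NN']; last 2 first.
- exact: measurable_neighbour_event.
- by apply/seteqP; split => w //= [wN wN']; move: NN'; rewrite -wN -wN' eqxx.
have -> : \bigcup_(N in [set N | xpredT N]) neighbour_event N = setT.
  by apply/seteqP; split => w // _; exists (neighbours w).
exact: probability_setT.
Qed.

Lemma configuration_disjoint p q : p.2 \subset p.1 -> q.2 \subset q.1 ->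
  p != q -> configuration p `&` configuration q = set0.
Proof.
case: p q => [N T] [N' T'] /= TN TN' pq; apply/seteqP; split => // w.
move=> [[/= wN labT] [/= wN' labT']]; apply/negP: pq; rewrite negbK.
have <- : N = N' by rewrite -wN -wN'.
apply/eqP; congr pair; apply/setP => i.
have [iN|iN] := boolP (i \in N); last first.
  rewrite (contraNF (fintype.subsetP TN i)) //.
  by rewrite (contraNF (fintype.subsetP TN' i)) // -wN' wN.
have [_ +] := labT i I; have [_ +] := labT' i I; rewrite /labels_on -wN' wN iN.
by case: (i \in T); case: (i \in T') => //= -> h; exfalso; lra.
Qed.

Lemma sum_prob_configurations (Q : pred nat) :
  (\sum_(p : {set 'I_n} * {set 'I_n} | (p.2 \subset p.1) && Q #|p.2|)
     P (configuration p))%E =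
  (\sum_(j < k.+1 | Q j) 'C(k, j)%:R * alpha ^+ j * (1 - alpha) ^+ (k - j))%:E.
Proof.
pose binom j := alpha ^+ j * (1 - alpha) ^+ (k - j).
transitivity (\sum_(N : {set 'I_n})
    \sum_(T : {set 'I_n} | (T \subset N) && Q #|T|) P (configuration (N, T)))%E.
  by rewrite pair_big_dep; apply: eq_big => -[N T].
transitivity (\sum_(N : {set 'I_n}) (fine (P (neighbour_event N)) *
    \sum_(j < k.+1 | Q j) 'C(k, j)%:R * binom j)%:E)%E.
  apply: eq_bigr => N _; have [cardN|cardN] := eqVneq #|N| k; last first.
    rewrite neighbour_event0 // measure0 /= mul0r big1 // => T _.
    by rewrite /configuration neighbour_event0 // set0I measure0.
  rewrite -(sum_subsets_by_card Q binom cardN) mulr_sumr -sumEFin.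
  by apply: eq_bigr => T /andP[TN _]; rewrite prob_configuration // cardN.
rewrite sumEFin -mulr_suml sum_prob_neighbour_event mul1r.
by congr (_%:E); apply: eq_bigr => j _; rewrite mulrA.
Qed.

Definition configurations (Q : pred nat) : set Omega :=
  \bigcup_(p in [set p : {set 'I_n} * {set 'I_n} | (p.2 \subset p.1) && Q #|p.2|])
    configuration p.

Lemma measurable_configurations Q : measurable (configurations Q).
Proof.
apply: fin_bigcup_measurable; first exact: finite_finset.
by move=> p _; exact: measurable_configuration.
Qed.

Lemma prob_configurations Q : P (configurations Q) =
  (\sum_(j < k.+1 | Q j) 'C(k, j)%:R * alpha ^+ j * (1 - alpha) ^+ (k - j))%:E.
Proof.
rewrite -sum_prob_configurations (measure_disjoint_sum P) //.
- exact: measurable_configuration.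
- by move=> p q /andP[? _] /andP[? _]; exact: configuration_disjoint.
Qed.

Lemma sum_labels_configuration N T w : T \subset N -> configuration (N, T) w ->
  \sum_(i in neighbours w) (S i w).2 = (k - #|T|)%:R - #|T|%:R.
Proof.
move=> TN [/= wN labT]; rewrite wN.
rewrite (eq_bigr (fun i => if i \in T then -1 else 1)) => [|i iN].
  by rewrite sum_subset_if // -wN card_neighbours addrC mulNrn.
by have [_] := labT i I; rewrite /labels_on iN; case: (i \in T).
Qed.

Lemma configurations_majority :
  configurations (fun j => j <= k./2)%N `<=` majority_positive.
Proof.
move=> w [[N T] /andP[/= TN Tk] cfg]; rewrite /majority_positive /=.
by rewrite (sum_labels_configuration TN cfg) subr_gt0 ltr_nat -leq_half_odd.
Qed.

Lemma configurations_minority :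
  configurations (fun j => ~~ (j <= k./2))%N `<=` ~` majority_positive.
Proof.
move=> w [[N T] /andP[/= TN Tk] cfg]; rewrite /majority_positive /=.
rewrite (sum_labels_configuration TN cfg) subr_gt0 ltr_nat -leq_half_odd //.
exact/negP.
Qed.

Lemma measurable_majority_positive : measurable majority_positive.
Proof.
have -> : majority_positive = \bigcup_(N in [set: {set 'I_n}])
    (neighbour_event N `&` [set w | 0 < \sum_(i <- enum N) (S i w).2]).
  apply/seteqP; split => [w wG|w [N _ [/= <-]]]; rewrite /= ?big_enum //.
  by exists (neighbours w); rewrite //= big_enum.
apply: fin_bigcup_measurable; first exact: finite_finset.
move=> N _; apply: measurableI; first exact: measurable_neighbour_event.
have msum : measurable_fun setT (fun w => \sum_(i <- enum N) (S i w).2).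
  by apply: measurable_sum => i; exact: measurableT_comp measurable_snd (mS i).
have mtrue : measurable [set true] by [].
have := measurable_fun_ltr (measurable_cst (0 : R)) msum measurableT mtrue.
by rewrite setTI.
Qed.

(* The configurations cover [Omega] only up to the null set where some label
   is not +-1, hence the sandwich rather than a decomposition of the event. *)
Lemma prob_majority_positive : P majority_positive = (phi k alpha)%:E.
Proof.
apply: (probability_sandwich (measurable_configurations _)
  (measurable_configurations _) measurable_majority_positive
  configurations_majority configurations_minority).
  by rewrite prob_configurations phiE.
have := binomial_sum1 k alpha.
rewrite (bigID (fun j : 'I_k.+1 => j <= k./2)%N) /= prob_configurations phiE.
by move=> sum1; rewrite -[X in (X - _)%:E]sum1 addrC addrK.
Qed.

Lemma knn_indicator w : knn k dist (fun i => S i w) x =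
  \1_majority_positive w - \1_(~` majority_positive) w.
Proof.
rewrite /knn knn_neighborsE -/(neighbours w) !indicE in_setC.
have -> : (w \in majority_positive) = (0 < \sum_(i in neighbours w) (S i w).2).
  by apply/idP/idP => [/set_mem | /mem_set].
by case: ifP => _; rewrite /= ?subr0 ?sub0r.
Qed.

End NearestNeighbours.

Unset Implicit Arguments.

Theorem proposition19
  (R : realType) (dX : measure_display) (X : measurableType dX)
  (Dx : probability X R) (alpha : R) (k n : nat)
  (dist : X -> X -> R)
  (dO : measure_display) (Omega : measurableType dO) (P : probability Omega R)
  (S : 'I_n -> Omega -> X * R) (x : X) :
  0 < alpha -> alpha <= 1 -> odd k -> (k <= n)%N ->
  is_metric dist ->
  (forall y, measurable_fun setT (dist y)) ->
  (* S = (S_1, ..., S_n) ~ D^n with D = Dx (x) D_y^alpha: i.i.d. samples *)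
  (forall i, measurable_fun setT (S i)) ->
  (forall i A, measurable A -> P (S i @^-1` A) = (Dx \x label_dist alpha)%E A) ->
  mutually_independent P S ->
  (\int[P]_w (knn k dist (fun i => S i w) x)%:E)%E = (-1 + 2 * phi k alpha)%:E.
Proof.
move=> alpha_gt0 alpha_le1 odd_k k_le_n _ mdist mS lawS indS.
have alpha_ge0 := ltW alpha_gt0.
have mG := measurable_majority_positive k x mdist mS.
have PG := prob_majority_positive x alpha_ge0 alpha_le1 odd_k k_le_n
  mdist mS lawS indS.
under eq_integral do rewrite knn_indicator.
by rewrite (integral_indicator_sign mG PG) addrC.
Qed.
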